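(* Let $S\subseteq\mathcal{RV}$ be finite, $\mu\in\mathcal{D}(\mathrm{Mem}[S])$, and let $Y=\{y_0,\dots,y_{K-1}\}$ be distinct randomized variables. Then $Y$ satisfies NA in $\mu$ (in particular $Y\subseteq S$) if and only if for every deterministic memory $\sigma$ (with domain contained in $\mathcal{DV}$) we have $(\sigma,\mu)\models\circledast_{i=0}^{K}[y_i]$.
   Context: Variables are split into disjoint sets $\mathcal{DV}$ (deterministic) and $\mathcal{RV}$ (randomized); values are real numbers. For finite $S$, $\mathrm{Mem}[S]$ is the set of maps $S\to\mathbb{R}$ ordered pointwise; $p_A$ is restriction; $\mathcal{D}(\cdot)$ denotes countably supported probability distributions; $\mathrm{dom}(\mu)=S$ for $\mu\in\mathcal{D}(\mathrm{Mem}[S])$; $\pi_A\mu$ is the marginal on $A$; $\mu\sqsubseteq\mu'$ iff $\mathrm{dom}(\mu)\subseteq\mathrm{dom}(\mu')$ and $\pi_{\mathrm{dom}(\mu)}\mu'=\mu$. A partition is a set of pairwise disjoint nonempty sets; $\mathcal{T}$ coarsens $\mathcal{S}$ if $\bigcup\mathcal{T}=\bigcup\mathcal{S}$ and each element of $\mathcal{T}$ is a union of a subfamily of $\mathcal{S}$. $\mu$ is $\mathcal{S}$-PNA (partition $\mathcal{S}$ with $\bigcup\mathcal{S}\subseteq\mathrm{dom}\mu$) if for every $\mathcal{T}$ coarsening $\mathcal{S}$ and every family $(f_A:\mathrm{Mem}[A]\to[0,\infty))_{A\in\mathcal{T}}$ all non-decreasing or all non-increasing, $\mathbb{E}_{m\sim\mu}[\prod_Af_A(p_Am)]\le\prod_A\mathbb{E}_{m\sim\mu}[f_A(p_Am)]$.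 $\mu_1\oplus\mu_2$ (domains $S,T$) is empty if $S\cap T\ne\emptyset$, and otherwise the set of $\mu\in\mathcal{D}(\mathrm{Mem}[S\cup T])$ with $\pi_S\mu=\mu_1$, $\pi_T\mu=\mu_2$ that are $(\mathcal{S}\cup\mathcal{T})$-PNA whenever $\mathcal{S}$ partitions a subset of $S$, $\mathcal{T}$ partitions a subset of $T$, $\mu_1$ is $\mathcal{S}$-PNA and $\mu_2$ is $\mathcal{T}$-PNA. $Y$ satisfies NA in $\mu$ if $Y\subseteq\mathrm{dom}(\mu)$ and for all disjoint $A,B\subseteq Y$ and all $f:\mathrm{Mem}[A]\to\mathbb{R}$, $g:\mathrm{Mem}[B]\to\mathbb{R}$ both non-decreasing or both non-increasing, each bounded below or bounded above, $\mathbb{E}_{m\sim\mu}[f(p_Am)g(p_Bm)]\le\mathbb{E}[f(p_Am)]\mathbb{E}[g(p_Bm)]$. States are pairs $(\sigma,\mu)$ of a deterministic memory $\sigma$ and a distribution $\mu$. Satisfaction: $(\sigma,\mu)\models[y]$ iff $y\in\mathrm{dom}(\sigma)\cup\mathrm{dom}(\mu)$; $(\sigma,\mu)\models P\circledast Q$ iff there exist $\mu',\mu_1,\mu_2$ with $\mu'\sqsubseteq\mu$, $\mu'\in\mu_1\oplus\mu_2$, $(\sigma,\mu_1)\models P$ and $(\sigma,\mu_2)\models Q$. The iterated conjunction is $\circledast_{i=0}^{1}P_i=P_0$ and $\circledast_{i=0}^{N}P_i=(\circledast_{i=0}^{N-1}P_i)\circledast P_{N-1}$ for $N>1$. *)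

From HB Require Import structures.
From mathcomp Require Import all_boot all_order all_algebra.
From mathcomp Require Import finmap.
From mathcomp Require Import all_classical all_reals.
From mathcomp Require Import topology ereal normedtype sequences.
Set Implicit Arguments. Unset Strict Implicit. Unset Printing Implicit Defensive.
Import Order.TTheory GRing.Theory Num.Theory.
Local Open Scope ring_scope.
Local Open Scope fset_scope.

(* Variables: (true, n) is the n-th randomized variable (RV),
   (false, n) the n-th deterministic variable (DV).  DV and RV are disjoint. *)
Definition var := (bool * nat)%type.
Definition isRV (x : var) : bool := x.1.

Section Defs.
Variable R : realType.

(* Memories are total maps var -> R; a memory in Mem[A] is represented by any
   map, read through the restriction [restr A] (the canonical representative
   is 0 outside A). *)
Definition rmem := var -> R.
Definition restr (A : {fset var}) (m : rmem) : rmem :=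
  fun x => if x \in A then m x else 0.

(* A countably supported probability distribution on Mem[dom]: atoms
   [pt n] (read through [restr dom]) with weights [wt n]. *)
Record distr := Distr { ddom : {fset var}; pt : nat -> rmem; wt : nat -> R }.

Definition valid_distr (mu : distr) : Prop :=
  (forall n, 0 <= wt mu n) /\ (\sum_(0 <= n <oo) (wt mu n)%:E = 1)%E.

Definition mass (mu : distr) (A : {fset var}) (m : rmem) : \bar R :=
  (\sum_(0 <= n <oo) (wt mu n * (`[< restr A (pt mu n) = restr A m >])%:R)%:E)%E.

Definition is_marginal (mu : distr) (A : {fset var}) (nu : distr) : Prop :=
  ddom nu = A /\ forall m, mass mu A m = mass nu A m.

Definition dsub (mu' mu : distr) : Prop :=
  ddom mu' `<=` ddom mu /\ is_marginal mu (ddom mu') mu'.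

Definition Enn (mu : distr) (h : rmem -> R) : \bar R :=
  (\sum_(0 <= n <oo) (wt mu n * h (pt mu n))%:E)%E.

(* expectation of a real-valued function: E[h^+] - E[h^-] (extended reals;
   the undefined case +oo - +oo evaluates to -oo by the library convention) *)
Definition Ex (mu : distr) (h : rmem -> R) : \bar R :=
  (Enn mu (fun m => Num.max (h m) 0%R) - Enn mu (fun m => Num.max (- h m)%R 0%R))%E.

Definition nondecr_on (A : {fset var}) (f : rmem -> R) : Prop :=
  forall m m', (forall x, x \in A -> m x <= m' x) -> f (restr A m) <= f (restr A m').
Definition nonincr_on (A : {fset var}) (f : rmem -> R) : Prop :=
  forall m m', (forall x, x \in A -> m x <= m' x) -> f (restr A m') <= f (restr A m).
Definition bdd_below_on (A : {fset var}) (f : rmem -> R) : Prop :=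
  exists c, forall m, c <= f (restr A m).
Definition bdd_above_on (A : {fset var}) (f : rmem -> R) : Prop :=
  exists c, forall m, f (restr A m) <= c.

Definition cover (P : {fset {fset var}}) : {fset var} := \bigcup_(A <- P) A.
Definition is_partition (P : {fset {fset var}}) : Prop :=
  (forall A, A \in P -> A != fset0) /\
  (forall A B, A \in P -> B \in P -> A != B -> [disjoint A & B]).
Definition coarsens (T S : {fset {fset var}}) : Prop :=
  cover T = cover S /\
  forall A, A \in T -> exists F : {fset {fset var}}, F `<=` S /\ A = cover F.

Definition PNA (mu : distr) (S : {fset {fset var}}) : Prop :=
  is_partition S /\ cover S `<=` ddom mu /\
  forall T : {fset {fset var}}, is_partition T -> coarsens T S ->
  forall f : {fset var} -> rmem -> R,
    (forall A, A \in T -> forall m, 0 <= f A (restr A m)) ->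
    ((forall A, A \in T -> nondecr_on A (f A)) \/
     (forall A, A \in T -> nonincr_on A (f A))) ->
    (Enn mu (fun m => (\prod_(A <- T) f A (restr A m))%R)
      <= \prod_(A <- T) Enn mu (fun m => f A (restr A m)))%E.

Definition in_oplus (mu mu1 mu2 : distr) : Prop :=
  [disjoint ddom mu1 & ddom mu2] /\
  ddom mu = ddom mu1 `|` ddom mu2 /\
  is_marginal mu (ddom mu1) mu1 /\ is_marginal mu (ddom mu2) mu2 /\
  forall S T : {fset {fset var}},
    is_partition S -> cover S `<=` ddom mu1 ->
    is_partition T -> cover T `<=` ddom mu2 ->
    PNA mu1 S -> PNA mu2 T -> PNA mu (S `|` T).

Definition NA (mu : distr) (Y : {fset var}) : Prop :=
  Y `<=` ddom mu /\
  forall A B : {fset var}, A `<=` Y -> B `<=` Y -> [disjoint A & B] ->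
  forall f g : rmem -> R,
    ((nondecr_on A f /\ nondecr_on B g) \/ (nonincr_on A f /\ nonincr_on B g)) ->
    (bdd_below_on A f \/ bdd_above_on A f) ->
    (bdd_below_on B g \/ bdd_above_on B g) ->
    (Ex mu (fun m => (f (restr A m) * g (restr B m))%R)
      <= Ex mu (fun m => f (restr A m)) * Ex mu (fun m => g (restr B m)))%E.

(* deterministic memories: only the domain matters for the assertions below *)
Record dmem := DMem { sdom : {fset var}; sval : var -> R }.

Definition assn := dmem -> distr -> Prop.

Definition sat_var (y : var) : assn :=
  fun sigma mu => y \in sdom sigma \/ y \in ddom mu.

Definition sat_star (P Q : assn) : assn :=
  fun sigma mu => exists mu' mu1 mu2 : distr,
    valid_distr mu' /\ valid_distr mu1 /\ valid_distr mu2 /\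
    dsub mu' mu /\ in_oplus mu' mu1 mu2 /\ P sigma mu1 /\ Q sigma mu2.

Fixpoint istar (P : nat -> assn) (N : nat) : assn :=
  match N with
  | 0 => P 0%N
  | 1 => P 0%N
  | N'.+1 => sat_star (istar P N') (P N')
  end.

End Defs.

(* [NA mu Y] is equivalent to [mu] being PNA for the partition of [Y] into
   singletons.  Given NA, the PNA product inequality for any coarsening follows
   by splitting off one block at a time.  Conversely, PNA for the coarsening
   [{A, Y \ A}] gives the NA inequality for nonnegative comonotone functions;
   nonnegative functions of opposite monotonicity reduce to that case through
   [phi] and [c - psi] after truncation at a level [c]; signed functions bounded
   on one side are split into positive and negative parts.
   The K-fold separating conjunction then unfolds by induction: each (+) step
   asks exactly for PNA of the union of the two partitions, NA supplies it with
   marginals of [mu] as witnesses, and PNA passes from [mu' [= mu] to [mu]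
   because the expectation of a function of the [D]-part of the memory only
   depends on the marginal on [D]. *)

From Pilot Require Import Defs.
From HB Require Import structures.
From mathcomp Require Import all_boot all_order all_algebra.
From mathcomp Require Import finmap.
From mathcomp Require Import all_classical all_reals.
From mathcomp Require Import ereal sequences esum numfun.
From mathcomp Require Import ring lra.
Set Implicit Arguments. Unset Strict Implicit. Unset Printing Implicit Defensive.
Import Order.TTheory GRing.Theory Num.Theory.
Local Open Scope ring_scope.
Local Open Scope fset_scope.

(* Plain [cover] would be [finset.cover]. *)
Local Notation cover := Defs.cover.

Lemma mem_imfset_iota (T : choiceType) (y : nat -> T) k x :
  reflect (exists2 i, (i < k)%N & x = y i) (x \in [fset y i | i in iota 0 k]).
Proof.
apply: (iffP idP) => [/imfsetP[i]|[i ik ->]]; last first.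
  by apply/imfsetP; exists i; rewrite //= mem_iota leq0n add0n.
by rewrite /= mem_iota leq0n add0n => ik ->; exists i.
Qed.

Lemma imfset_iotaS (T : choiceType) (y : nat -> T) k :
  [fset y i | i in iota 0 k.+1] = [fset y i | i in iota 0 k] `|` [fset y k].
Proof.
apply/fsetP => x; rewrite in_fsetU in_fset1.
apply/mem_imfset_iota/orP => [[i ik ->]|[/mem_imfset_iota[i ik ->]|/eqP ->]].
- move: ik; rewrite ltnS leq_eqVlt => /orP[/eqP ->|ik]; first by right.
  by left; apply/mem_imfset_iota; exists i.
- by exists i => //; exact: ltnW.
- by exists k.
Qed.

Lemma imfset_iota1 (T : choiceType) (y : nat -> T) : [fset y i | i in iota 0 1] = [fset y 0%N].
Proof.
apply/fsetP => x; rewrite in_fset1.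
by apply/mem_imfset_iota/eqP => [[[|i] // _ ->]|->]; exists 0%N.
Qed.

Lemma imfset_iota_sub (T : choiceType) (y : nat -> T) k l : (k <= l)%N ->
  [fset y i | i in iota 0 k] `<=` [fset y i | i in iota 0 l].
Proof.
move=> kl; apply/fsubsetP => x /mem_imfset_iota[i ik ->].
by apply/mem_imfset_iota; exists i => //; exact: leq_trans kl.
Qed.

Lemma fsubset_cover (P : {fset {fset var}}) A : A \in P -> A `<=` cover P.
Proof. by move=> AP; apply: bigfcup_sup. Qed.

Lemma coverU (S T : {fset {fset var}}) : cover (S `|` T) = cover S `|` cover T.
Proof.
apply/fsetP => x; rewrite in_fsetU.
apply/bigfcupP/orP => [[A /andP[/fsetUP[AS|AT] _] xA]|[]/bigfcupP[A /andP[AP _] xA]].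
- by left; apply/bigfcupP; exists A; rewrite ?AS.
- by right; apply/bigfcupP; exists A; rewrite ?AT.
- by exists A; rewrite // in_fsetU AP.
- by exists A; rewrite // in_fsetU AP orbT.
Qed.

Lemma cover_fset1 A : cover [fset A] = A.
Proof. exact: big_seq_fset1. Qed.

Lemma is_partition_fset1 A : A != fset0 -> is_partition [fset A].
Proof. by move=> A_neq0; split=> [B|B C]; rewrite !in_fset1 => /eqP ->// /eqP -> /negP. Qed.

Lemma is_partitionU (S T : {fset {fset var}}) :
  is_partition S -> is_partition T -> [disjoint cover S & cover T] ->
  is_partition (S `|` T).
Proof.
move=> [S0 Sdis] [T0 Tdis] dST; split=> [A /fsetUP[/S0|/T0] //|].
have dAB A B : A \in S -> B \in T -> [disjoint A & B].
  by move=> AS BT; apply: fdisjointWl (fsubset_cover AS) (fdisjointWr (fsubset_cover BT) dST).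
move=> A B /fsetUP[AS|AT] /fsetUP[BS|BT] AB.
- exact: Sdis.
- exact: dAB.
- by rewrite fdisjoint_sym; exact: dAB.
- exact: Tdis.
Qed.

Definition singletons (Y : {fset var}) : {fset {fset var}} := [fset [fset x] | x in Y].

Lemma singletonsU A B : singletons (A `|` B) = singletons A `|` singletons B.
Proof. exact: imfsetU. Qed.

Lemma singletons1 x : singletons [fset x] = [fset [fset x]].
Proof. exact: imfset_fset1. Qed.

Lemma fset1_neq0 (x : var) : [fset x] != fset0.
Proof. by apply/eqP => /fsetP/(_ x); rewrite !inE eqxx. Qed.

Lemma singletons_sub X Y : X `<=` Y -> singletons X `<=` singletons Y.
Proof.
move=> XY; apply/fsubsetP => _ /imfsetP[x /= xX ->].
by apply/imfsetP; exists x => //; exact: (fsubsetP XY).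
Qed.

Lemma cover_singletons Y : cover (singletons Y) = Y.
Proof.
apply/fsetP => x; apply/bigfcupP/idP => [[_ /andP[/imfsetP[z /= zY ->] _]]|xY].
  by rewrite in_fset1 => /eqP ->.
by exists [fset x]; rewrite ?in_fset1 // andbT; apply/imfsetP; exists x.
Qed.

Lemma coarsens_singletons (T : {fset {fset var}}) : coarsens T (singletons (cover T)).
Proof.
split=> [|X XT]; first by rewrite cover_singletons.
by exists (singletons X); rewrite cover_singletons singletons_sub ?fsubset_cover.
Qed.

Section RestrictedProducts.
Variable R : realType.
Implicit Types (m : rmem R) (A B : {fset var}).

Lemma restr_restr A B m : A `<=` B -> restr A (restr B m) = restr A m.
Proof. by move=> /fsubsetP AB; apply/funext => x; rewrite /restr; case: ifP => // /AB ->. Qed.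

Lemma restr_fset0 m m' : restr fset0 m = restr fset0 m'.
Proof. by apply/funext => x; rewrite /restr in_fset0. Qed.

Lemma nondecr_on_sub A B (f : rmem R -> R) :
  A `<=` B -> nondecr_on A f -> nondecr_on B (fun m => f (restr A m)).
Proof.
move=> AB f_mono m m' mm'; rewrite !restr_restr//.
by apply: f_mono => x xA; apply/mm'/(fsubsetP AB).
Qed.

Lemma nonincr_on_sub A B (f : rmem R -> R) :
  A `<=` B -> nonincr_on A f -> nonincr_on B (fun m => f (restr A m)).
Proof.
move=> AB f_mono m m' mm'; rewrite !restr_restr//.
by apply: f_mono => x xA; apply/mm'/(fsubsetP AB).
Qed.

Variables (s : seq {fset var}) (f : {fset var} -> rmem R -> R) (B : {fset var}).
Hypotheses (s_B : forall A, A \in s -> A `<=` B)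
           (f_ge0 : forall A, A \in s -> forall m, (0 <= f A (restr A m))%R).

Lemma prod_restr_restr m :
  \prod_(A <- s) f A (restr A (restr B m)) = \prod_(A <- s) f A (restr A m).
Proof. by rewrite big_seq [RHS]big_seq; apply: eq_bigr => A As; rewrite restr_restr ?s_B. Qed.

Lemma nondecr_on_prod : (forall A, A \in s -> nondecr_on A (f A)) ->
  nondecr_on B (fun m => \prod_(A <- s) f A (restr A m)).
Proof.
move=> f_mono m m' mm'; rewrite big_seq [X in (_ <= X)%R]big_seq.
apply: ler_prod => A As; rewrite f_ge0//=.
exact: (nondecr_on_sub (s_B As) (f_mono A As)).
Qed.

Lemma nonincr_on_prod : (forall A, A \in s -> nonincr_on A (f A)) ->
  nonincr_on B (fun m => \prod_(A <- s) f A (restr A m)).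
Proof.
move=> f_mono m m' mm'; rewrite big_seq [X in (_ <= X)%R]big_seq.
apply: ler_prod => A As; rewrite f_ge0//=.
exact: (nonincr_on_sub (s_B As) (f_mono A As)).
Qed.

End RestrictedProducts.

Section ExtendedReals.
Variable R : realType.
Local Open Scope ereal_scope.
Implicit Types (u v : nat -> \bar R) (C : \bar R).

Lemma nneseries_ge_term u n : (forall i, 0 <= u i) -> u n <= \sum_(0 <= i <oo) u i.
Proof. by move=> u0; rewrite (@nneseriesD1 _ u n xpredT)// leeDl// nneseries_ge0. Qed.

Lemma sumr_ge_term (F : nat -> R) k i :
  (forall j, 0 <= F j)%R -> (i < k)%N -> (F i <= \sum_(0 <= j < k) F j)%R.
Proof.
move=> F_ge0 ik; rewrite big_mkord (bigD1 (Ordinal ik)) //= lerDl.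
by apply: sumr_ge0 => j _.
Qed.

Lemma sum_le_nneseries u v k : (forall i, 0 <= v i) -> (forall i, (i < k)%N -> u i <= v i) ->
  \sum_(0 <= i < k) u i <= \sum_(0 <= i <oo) v i.
Proof.
move=> v_ge0 uv; apply: le_trans (nneseries_lim_ge k (fun i _ _ => v_ge0 i)).
by rewrite big_nat_cond [X in _ <= X]big_nat_cond; apply: lee_sum => i /andP[/andP[_ /uv]].
Qed.

Lemma nneseries_le_ub u C :
  (forall i, 0 <= u i) -> (forall k, \sum_(0 <= i < k) u i <= C) ->
  \sum_(0 <= i <oo) u i <= C.
Proof.
move=> u0 uC; have nd : nondecreasing_seq (fun n => \sum_(0 <= i < n) u i).
  by apply: (@ereal_nondecreasing_series _ u xpredT 0) => n _ _.
rewrite (cvg_lim _ (ereal_nondecreasing_cvgn nd))//.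
by apply: ge_ereal_sup => _ [k _ <-].
Qed.

Lemma nneseriesM_le (a b : nat -> R) C :
  (forall i, (0 <= a i)%R) -> (forall i, (0 <= b i)%R) ->
  (forall k l, (\sum_(0 <= i < k) (a i)%:E) * (\sum_(0 <= i < l) (b i)%:E) <= C) ->
  (\sum_(0 <= i <oo) (a i)%:E) * (\sum_(0 <= i <oo) (b i)%:E) <= C.
Proof.
move=> a0 b0 abC.
have Sa0 k : 0 <= \sum_(0 <= i < k) (a i)%:E by apply: sume_ge0 => i _; rewrite lee_fin.
have C0 : 0 <= C by apply: le_trans (abC 0%N 0%N); rewrite !big_geq// mule0.
have partial_series k : (\sum_(0 <= i < k) (a i)%:E) * (\sum_(0 <= i <oo) (b i)%:E) <= C.
  rewrite sumEFin -nneseriesZl; last by move=> i _; rewrite lee_fin.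
  apply: nneseries_le_ub => [i|l]; first by rewrite -EFinM lee_fin mulr_ge0// sumr_ge0.
  rewrite -ge0_sume_distrr; last by move=> i _; rewrite lee_fin.
  by rewrite -sumEFin; exact: abC.
have : 0 <= \sum_(0 <= i <oo) (b i)%:E by apply: nneseries_ge0 => i _ _; rewrite lee_fin.
move: partial_series; case: (\sum_(0 <= i <oo) (b i)%:E) => [s| |] partial_series s0.
- rewrite muleC -nneseriesZl => [|i _]; last by rewrite lee_fin.
  apply: nneseries_le_ub => [i|k]; first by rewrite lee_fin mulr_ge0.
  by rewrite -ge0_sume_distrr => [|i _]; rewrite ?lee_fin// muleC; exact: partial_series.
- case: C C0 abC partial_series => [c| |] C0 abC partial_series; last 2 first.
  + by rewrite leey.
  + by move: C0; rewrite leeNy_eq.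
  have Sa_eq0 k : \sum_(0 <= i < k) (a i)%:E = 0.
    have := partial_series k; have := Sa0 k; rewrite le_eqVlt => /orP[/eqP <-//|Sk].
    by rewrite gt0_muley.
  suff -> : \sum_(0 <= i <oo) (a i)%:E = 0 by rewrite mul0e.
  apply/eqP; rewrite eq_le nneseries_ge0 ?andbT => [|i _ _]; last by rewrite lee_fin.
  by apply: nneseries_le_ub => [i|k]; rewrite ?lee_fin ?Sa_eq0.
- by move: s0; rewrite leeNy_eq.
Qed.

Section ExpandProduct.
Let mulBB_le (a1 a2 b1 b2 : \bar R) :=
  a1 * b1 + a2 * b2 - (a1 * b2 + a2 * b1) <= (a1 - a2) * (b1 - b2).

Let ge0_fin_or_pinfty (x : \bar R) : 0 <= x -> x = +oo \/ x \is a fin_num.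
Proof. by case: x => [r| |] x0; [right|left|move: x0; rewrite leeNy_eq]. Qed.

Let oppeB_ge0 (u v : \bar R) :
  0 <= u -> 0 <= v -> (u \is a fin_num \/ v \is a fin_num) -> v - u = - (u - v).
Proof.
move=> u0 v0 uv; rewrite oppeB; first by rewrite addeC.
rewrite /adde_def; apply/andP; split.
  rewrite negb_and; case: uv => [uf|vf]; apply/orP; [left|right].
  - by move: uf; rewrite fin_numE => /andP[].
  - by rewrite eqe_oppLR /=; move: vf; rewrite fin_numE => /andP[].
by rewrite negb_and gt_eqF// (lt_le_trans _ u0)// ltNy0.
Qed.

Let mulBB_le_sym a1 a2 b1 b2 : mulBB_le b1 b2 a1 a2 -> mulBB_le a1 a2 b1 b2.
Proof.
rewrite /mulBB_le (muleC b1 a1) (muleC b2 a2) (muleC b1 a2) (muleC b2 a1).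
by rewrite (addeC (a2 * b1)) (muleC (b1 - b2)).
Qed.

Let mulBB_le_swap a1 a2 b1 b2 :
  0 <= a1 -> 0 <= a2 -> 0 <= b1 -> 0 <= b2 ->
  (a1 \is a fin_num \/ a2 \is a fin_num) -> (b1 \is a fin_num \/ b2 \is a fin_num) ->
  mulBB_le a2 a1 b2 b1 -> mulBB_le a1 a2 b1 b2.
Proof.
move=> a10 a20 b10 b20 af bf; rewrite /mulBB_le.
rewrite (oppeB_ge0 a10 a20 af) (oppeB_ge0 b10 b20 bf) muleNN.
by rewrite (addeC (a2 * b2)) (addeC (a2 * b1)).
Qed.

Let mulBB_le_pinfty a2 b1 b2 :
  a2 \is a fin_num -> 0 <= a2 -> 0 <= b1 -> 0 <= b2 -> mulBB_le +oo a2 b1 b2.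
Proof.
move=> a2f a20 b10 b20; rewrite /mulBB_le.
have [b2_gt0|b2_eq0] : 0 < b2 \/ b2 = 0.
  by move: b20; rewrite le_eqVlt => /orP[/eqP ->|]; [right|left].
  have a2b1 : a2 * b1 != -oo by rewrite gt_eqF// (lt_le_trans _ (mule_ge0 a20 b10))// ltNy0.
  by rewrite (gt0_mulye b2_gt0) (addye a2b1) addeNy leNye.
rewrite b2_eq0 !mule0 sube0 add0e adde0.
rewrite addye; last by rewrite eqe_oppLR /=; move: a2f; rewrite fin_numE => /andP[].
have [b1_gt0|b1_eq0] : 0 < b1 \/ b1 = 0.
  by move: b10; rewrite le_eqVlt => /orP[/eqP ->|]; [right|left].
  by rewrite gt0_mulye// leey.
by rewrite b1_eq0 !mule0 subee.
Qed.

Lemma lee_mulBB (a1 a2 b1 b2 : \bar R) :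
  0 <= a1 -> 0 <= a2 -> 0 <= b1 -> 0 <= b2 ->
  (a1 \is a fin_num \/ a2 \is a fin_num) -> (b1 \is a fin_num \/ b2 \is a fin_num) ->
  a1 * b1 + a2 * b2 - (a1 * b2 + a2 * b1) <= (a1 - a2) * (b1 - b2).
Proof.
(* Swapping the [a]s with the [b]s, or the indices 1 and 2, reduces the
   infinite cases to [a1 = +oo]. *)
move=> a10 a20 b10 b20 af bf; rewrite -/(mulBB_le a1 a2 b1 b2).
have fin_other (x z : \bar R) : x = +oo -> x \is a fin_num \/ z \is a fin_num -> z \is a fin_num.
  by move=> -> [].
case: (ge0_fin_or_pinfty a10) => [a1y|a1f].
  by rewrite a1y; apply: mulBB_le_pinfty => //; exact: fin_other af.
case: (ge0_fin_or_pinfty a20) => [a2y|a2f].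
  by apply: mulBB_le_swap => //; rewrite a2y; apply: mulBB_le_pinfty.
case: (ge0_fin_or_pinfty b10) => [b1y|b1f].
  by apply: mulBB_le_sym; rewrite b1y; apply: mulBB_le_pinfty => //; exact: fin_other bf.
case: (ge0_fin_or_pinfty b20) => [b2y|b2f].
  apply: mulBB_le_sym; apply: mulBB_le_swap => //; try by left.
  by rewrite b2y; apply: mulBB_le_pinfty.
rewrite /mulBB_le -(fineK a1f) -(fineK a2f) -(fineK b1f) -(fineK b2f).
by rewrite -!EFinM -!EFinD lee_fin le_eqVlt; apply/orP; left; apply/eqP; ring.
Qed.

End ExpandProduct.
End ExtendedReals.

Section Expectation.
Variables (R : realType) (mu : distr R).
Hypothesis mu_valid : valid_distr mu.
Local Open Scope ereal_scope.
Implicit Types (h g : rmem R -> R) (D : {fset var}) (m : rmem R).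

Lemma valid_wt_ge0 n : (0 <= wt mu n)%R.
Proof. by case: mu_valid. Qed.

Lemma eq_Enn h g : h =1 g -> Enn mu h = Enn mu g.
Proof. by move=> /funext ->. Qed.

Lemma Enn_cst (c : R) : Enn mu (fun=> c) = c%:E.
Proof.
have [wt_ge0 wt_sum1] := mu_valid.
rewrite /Enn; under eq_eseriesr do rewrite EFinM muleC.
by rewrite nneseriesZl ?wt_sum1 ?mule1// => n _; rewrite lee_fin.
Qed.

Lemma Enn_ge0 h : (forall m, 0 <= h m)%R -> 0 <= Enn mu h.
Proof. by move=> h0; apply: nneseries_ge0 => n _ _; rewrite lee_fin mulr_ge0 ?valid_wt_ge0. Qed.

Lemma le_Enn h g : (forall m, 0 <= h m)%R -> (forall m, h m <= g m)%R ->
  Enn mu h <= Enn mu g.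
Proof.
move=> h0 hg; apply: lee_nneseries => n _; last by rewrite lee_fin ler_wpM2l ?valid_wt_ge0.
by rewrite lee_fin mulr_ge0 ?valid_wt_ge0.
Qed.

Lemma EnnD h g : (forall m, 0 <= h m)%R -> (forall m, 0 <= g m)%R ->
  Enn mu (h \+ g)%R = Enn mu h + Enn mu g.
Proof.
move=> h0 g0; rewrite /Enn -nneseriesD; last 2 first.
- by move=> n _ _; rewrite lee_fin mulr_ge0 ?valid_wt_ge0.
- by move=> n _ _; rewrite lee_fin mulr_ge0 ?valid_wt_ge0.
by apply: eq_eseriesr => n _; rewrite -EFinD mulrDr.
Qed.

Lemma EnnZl (c : R) h : (forall m, 0 <= h m)%R ->
  Enn mu (fun m => c * h m)%R = c%:E * Enn mu h.
Proof.
move=> h0; rewrite /Enn -nneseriesZl => [|n _]; last by rewrite lee_fin mulr_ge0 ?valid_wt_ge0.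
by apply: eq_eseriesr => n _; rewrite -EFinM mulrCA.
Qed.

Lemma Enn_fin_num h (d : R) : (forall m, 0 <= h m <= d)%R -> Enn mu h \is a fin_num.
Proof.
move=> hd; have h0 m : (0 <= h m)%R by case/andP: (hd m).
rewrite ge0_fin_numE ?Enn_ge0// (@le_lt_trans _ _ d%:E) ?ltry// -Enn_cst.
by apply: le_Enn => // m; case/andP: (hd m).
Qed.

Lemma ExE h : Ex mu h = Enn mu (h^\+)%R - Enn mu (h^\-)%R.
Proof. by []. Qed.

Lemma ge0_ExE h : (forall m, 0 <= h m)%R -> Ex mu h = Enn mu h.
Proof.
move=> h0; have pos : Enn mu (h^\+)%R = Enn mu h.
  by apply: eq_Enn => m; rewrite /funrpos max_l.
have neg : Enn mu (h^\-)%R = 0%:E.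
  by rewrite -(Enn_cst 0); apply: eq_Enn => m; rewrite /funrneg max_r// oppr_le0.
by rewrite ExE pos neg sube0.
Qed.

Lemma massE D m : mass mu D m = Enn mu (fun m' => (`[< restr D m' = restr D m >])%:R).
Proof. by []. Qed.

Lemma mass_ge_wt D m n : restr D (pt mu n) = restr D m -> (wt mu n)%:E <= mass mu D m.
Proof.
move=> e; have := @nneseries_ge_term R
  (fun i => (wt mu i * (`[< restr D (pt mu i) = restr D m >])%:R)%:E) n.
by rewrite (asboolT e) mulr1; apply => i; rewrite lee_fin mulr_ge0 ?valid_wt_ge0.
Qed.

Lemma mass_ge0 D m : 0 <= mass mu D m.
Proof. by rewrite massE Enn_ge0// => m'; case: asboolP. Qed.

Lemma mass_fin_num D m : mass mu D m \is a fin_num.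
Proof.
by rewrite massE (@Enn_fin_num _ 1%R) // => m'; case: asboolP => _; rewrite ?lexx ?ler01.
Qed.

Lemma eq_mass_restr D m m' : restr D m = restr D m' -> mass mu D m = mass mu D m'.
Proof. by rewrite /mass => ->. Qed.

End Expectation.

Section Marginal.
Variables (R : realType) (D : {fset var}) (h : rmem R -> R).
Hypotheses (h_ge0 : forall m, (0 <= h m)%R) (hD : forall m, h (restr D m) = h m).
Local Open Scope ereal_scope.

(* Both expectations equal the double series of [term], weighting each pair of
   D-equivalent atoms by the share of [h] in the mass of their common D-class. *)
Let share (mu : distr R) (m : rmem R) : R := (h m / fine (mass mu D m))%R.

Let term (nu mu : distr R) n k : \bar R :=
  (wt nu n * wt mu k * (`[< restr D (pt mu k) = restr D (pt nu n) >])%:R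
   * share mu (pt nu n))%:E.

Let term_ge0 (nu mu : distr R) n k :
  valid_distr nu -> valid_distr mu -> 0 <= term nu mu n k.
Proof.
by move=> nu_valid mu_valid; rewrite lee_fin !mulr_ge0 ?valid_wt_ge0 ?invr_ge0 ?fine_ge0 ?mass_ge0.
Qed.

Let sum_term (nu mu : distr R) n :
  valid_distr nu -> valid_distr mu -> (forall m, mass nu D m = mass mu D m) ->
  \sum_(0 <= k <oo) term nu mu n k = (wt nu n * h (pt nu n))%:E.
Proof.
move=> nu_valid mu_valid same_mass.
have -> : term nu mu n = fun k => (wt nu n * share mu (pt nu n))%:E *
    (wt mu k * (`[< restr D (pt mu k) = restr D (pt nu n) >])%:R)%:E.
  by apply/funext => k; rewrite /term -EFinM; congr EFin; ring.
rewrite nneseriesZl => [|k _]; last first.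
  by rewrite lee_fin mulr_ge0 ?valid_wt_ge0//; case: asboolP.
rewrite -/(mass mu D (pt nu n)) -(fineK (mass_fin_num mu_valid _ _)) -EFinM; congr EFin.
set a := fine (mass mu D (pt nu n)); rewrite /share -/a.
(* A class of zero mass makes [share] junk, but then its atoms have zero weight. *)
have [a0|a_neq0] := eqVneq a 0%R; last by rewrite -mulrA mulfVK.
have wt_le : (wt nu n)%:E <= a%:E by rewrite fineK ?mass_fin_num// -same_mass mass_ge_wt.
have -> : wt nu n = 0%R by apply/le_anti; rewrite (valid_wt_ge0 nu_valid) andbT -a0 -lee_fin.
by rewrite !mul0r.
Qed.

Let term_sym (nu mu : distr R) n k :
  (forall m, mass nu D m = mass mu D m) -> term nu mu n k = term mu nu k n.
Proof.
move=> same_mass; rewrite /term.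
have [e|ne] := asboolP (restr D (pt mu k) = restr D (pt nu n)); last first.
  by rewrite asboolF ?mulr0 ?mul0r// => /esym.
rewrite (asboolT (esym e)) /share -hD -e hD -(eq_mass_restr _ e) -same_mass.
by rewrite (mulrC (wt nu n)).
Qed.

Lemma Enn_eq_marginal (nu mu : distr R) :
  valid_distr nu -> valid_distr mu -> (forall m, mass nu D m = mass mu D m) ->
  Enn nu h = Enn mu h.
Proof.
move=> nu_valid mu_valid same_mass; rewrite /Enn.
under eq_eseriesr => n _ do rewrite -(sum_term n nu_valid mu_valid same_mass).
rewrite nneseries_interchange => [|n k]; last exact: term_ge0.
apply: eq_eseriesr => k _; rewrite -(sum_term k mu_valid nu_valid (fun m => esym (same_mass m))).
by apply: eq_eseriesr => n _; exact: term_sym.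
Qed.

End Marginal.

Section PNATransfer.
Variable R : realType.
Implicit Types (mu nu : distr R) (m : rmem R) (D Y : {fset var}).
Local Open Scope ereal_scope.

Lemma PNA_dsub nu mu S :
  valid_distr nu -> valid_distr mu -> dsub mu nu -> PNA mu S -> PNA nu S.
Proof.
move=> nu_valid mu_valid [sub_dom [_ same_mass]] [S_part [S_dom PNA_mu]].
split=> //; split=> [|T T_part T_S f f_ge0 f_mono]; first exact: fsubset_trans sub_dom.
have T_dom A : A \in T -> A `<=` ddom mu.
  by move=> AT; apply: fsubset_trans S_dom; case: T_S => <- _; exact: fsubset_cover.
rewrite (Enn_eq_marginal _ _ nu_valid mu_valid same_mass); first last.
- by move=> m; rewrite big_seq [in RHS]big_seq; apply: eq_bigr => A AT; rewrite restr_restr ?T_dom.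
- by move=> m; rewrite big_seq; apply: prodr_ge0 => A AT; exact: f_ge0.
have -> : \prod_(A <- T) Enn nu (fun m => f A (restr A m)) =
          \prod_(A <- T) Enn mu (fun m => f A (restr A m)).
  rewrite big_seq [in RHS]big_seq; apply: eq_bigr => A AT.
  apply: (Enn_eq_marginal _ _ nu_valid mu_valid same_mass) => [m|m]; first exact: f_ge0.
  by rewrite restr_restr ?T_dom.
exact: PNA_mu.
Qed.

Lemma PNA_fset1 nu A : A != fset0 -> A `<=` ddom nu -> PNA nu [fset A].
Proof.
move=> A_neq0 A_dom; split; first exact: is_partition_fset1.
split=> [|T [T_neq0 _] [T_cover T_blocks] f _ _]; first by rewrite cover_fset1.
have memT B : B \in T -> B = A.
  move=> BT; have [F [+ B_cover]] := T_blocks B BT; rewrite fsubset1.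
  case/orP=> /eqP F_eq; move: (T_neq0 B BT); rewrite B_cover F_eq ?cover_fset1//.
  by rewrite /cover big_seq_fset0 eqxx.
have -> : T = [fset A].
  apply/fsetP => B; rewrite in_fset1; apply/idP/eqP => [/memT //|->].
  have [A0|[a aA]] := fset_0Vmem A; first by rewrite A0 eqxx in A_neq0.
  have : a \in cover T by rewrite T_cover cover_fset1.
  by case/bigfcupP => C /andP[CT _] _; rewrite -(memT C CT).
by rewrite big_seq_fset1; under eq_Enn do rewrite big_seq_fset1.
Qed.

End PNATransfer.

(* For [D] inside [ddom mu], [reframe mu D] represents the marginal [pi_D mu]. *)
Definition reframe (R : realType) (mu : distr R) (D : {fset var}) : distr R :=
  Distr D (pt mu) (wt mu).

Lemma reframe_ddom (R : realType) (mu : distr R) : reframe mu (ddom mu) = mu.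
Proof. by case: mu. Qed.

Section NAToSeparatingConjunction.
Variables (R : realType) (mu : distr R) (Y : {fset var}).
Hypotheses (mu_valid : valid_distr mu) (mu_NA : NA mu Y).
Local Open Scope ereal_scope.

Lemma NA_Enn_prod_le (s : seq {fset var}) (f : {fset var} -> rmem R -> R) :
  uniq s -> (forall A B, A \in s -> B \in s -> A != B -> [disjoint A & B]) ->
  (forall A, A \in s -> A `<=` Y) ->
  (forall A, A \in s -> forall m, 0 <= f A (restr A m))%R ->
  ((forall A, A \in s -> nondecr_on A (f A)) \/
   (forall A, A \in s -> nonincr_on A (f A))) ->
  Enn mu (fun m => \prod_(A <- s) f A (restr A m))%R
    <= \prod_(A <- s) Enn mu (fun m => f A (restr A m)).
Proof.
elim: s f => [|A s IH] f.
  by move=> *; rewrite big_nil; under eq_Enn do rewrite big_nil; rewrite Enn_cst.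
rewrite cons_uniq => /andP[A_notin s_uniq] s_dis s_Y f_ge0 f_mono.
have in_tail X : X \in s -> X \in A :: s by move=> Xs; rewrite inE Xs orbT.
set B := \bigcup_(X <- s) X.
have s_B X : X \in s -> X `<=` B by move=> Xs; apply: bigfcup_sup.
have dAB : [disjoint A & B].
  apply/fdisjointP => a aA; apply/negP => /bigfcupP[X /andP[Xs _] aX].
  have AX : A != X by apply: contraNneq A_notin => ->.
  by move/fdisjointP: (s_dis A X (mem_head _ _) (in_tail X Xs) AX) => /(_ a aA); rewrite aX.
have fs_ge0 X : X \in s -> forall m, (0 <= f X (restr X m))%R by move=> /in_tail; exact: f_ge0.
set G := fun m => (\prod_(X <- s) f X (restr X m))%R.
have GB m : G (restr B m) = G m by exact: prod_restr_restr.
have fA_ge0 m : (0 <= f A (restr A m))%R by exact/f_ge0/mem_head.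
have GB_ge0 m : (0 <= G (restr B m))%R by rewrite /G big_seq prodr_ge0// => X /fs_ge0.
have AG_mono : (nondecr_on A (f A) /\ nondecr_on B G) \/
               (nonincr_on A (f A) /\ nonincr_on B G).
  case: f_mono => f_mono; [left|right]; split; try exact/f_mono/mem_head.
  - by apply: nondecr_on_prod => // X /in_tail; exact: f_mono.
  - by apply: nonincr_on_prod => // X /in_tail; exact: f_mono.
have A_Y : A `<=` Y by exact/s_Y/mem_head.
have B_Y : B `<=` Y by apply/bigfcupsP => X Xs _; exact/s_Y/in_tail.
have := mu_NA.2 A B A_Y B_Y dAB (f A) G AG_mono
  (or_introl (ex_intro _ 0%R fA_ge0)) (or_introl (ex_intro _ 0%R GB_ge0)).
rewrite !ge0_ExE//; last by move=> m; exact: mulr_ge0.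
under eq_Enn do rewrite GB; under [X in _ <= _ * X]eq_Enn do rewrite GB.
move=> le_AG; rewrite big_cons; under eq_Enn do rewrite big_cons.
apply: le_trans le_AG _; apply: lee_wpmul2l; first exact: Enn_ge0 mu_valid _ fA_ge0.
apply: IH => //.
- by move=> X Z Xs Zs; apply: s_dis; exact: in_tail.
- by move=> X Xs; exact/s_Y/in_tail.
- by case: f_mono => f_mono; [left|right] => X Xs; exact/f_mono/in_tail.
Qed.

Lemma PNA_reframe_of_NA D P :
  is_partition P -> cover P `<=` Y -> cover P `<=` D -> PNA (reframe mu D) P.
Proof.
move=> P_part P_Y P_D; split=> //; split=> // T [_ T_dis] [T_cover _] f f_ge0 f_mono.
apply: NA_Enn_prod_le => //; first exact: fset_uniq.
by move=> A AT; apply: fsubset_trans P_Y; rewrite -T_cover; exact: fsubset_cover.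
Qed.

Lemma in_oplus_reframe D1 D2 : D1 `|` D2 `<=` Y -> [disjoint D1 & D2] ->
  in_oplus (reframe mu (D1 `|` D2)) (reframe mu D1) (reframe mu D2).
Proof.
move=> D_Y D_dis; do 4 split=> //.
move=> S T S_part S_D1 T_part T_D2 _ _; apply: PNA_reframe_of_NA.
- by apply: is_partitionU => //; apply: fdisjointWl S_D1 (fdisjointWr T_D2 D_dis).
- by apply: fsubset_trans D_Y; rewrite coverU fsetUSS.
- by rewrite coverU fsetUSS.
Qed.

End NAToSeparatingConjunction.

Lemma istar_reframe_of_NA (R : realType) (mu : distr R) K (y : nat -> var) (sigma : dmem R) :
  valid_distr mu -> (forall i j, (i < K)%N -> (j < K)%N -> y i = y j -> i = j) ->
  NA mu [fset y i | i in iota 0 K] ->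
  forall k D, (0 < k <= K)%N -> [fset y i | i in iota 0 k] `<=` D ->
  istar (fun i => @sat_var R (y i)) k sigma (reframe mu D).
Proof.
move=> mu_valid y_inj mu_NA; elim=> [//|[|k] IH] D /andP[_ kK] Yk_D.
  by right; apply: (fsubsetP Yk_D); apply/mem_imfset_iota; exists 0%N.
have y_fresh : [disjoint [fset y i | i in iota 0 k.+1] & [fset y k.+1]].
  apply/fdisjointP => _ /mem_imfset_iota[i ik ->]; rewrite in_fset1.
  apply/negP => /eqP/(y_inj i k.+1 (ltn_trans ik kK) kK) ik_eq.
  by rewrite ik_eq ltnn in ik.
exists (reframe mu [fset y i | i in iota 0 k.+2]),
       (reframe mu [fset y i | i in iota 0 k.+1]), (reframe mu [fset y k.+1]).
do 3 split=> //; split; first by [].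
split.
  rewrite [in reframe mu [fset y i | i in iota 0 k.+2]]imfset_iotaS.
  by apply: (in_oplus_reframe mu_valid mu_NA) => //; rewrite -imfset_iotaS imfset_iota_sub.
by split; [apply: IH; rewrite ?(ltnW kK) | right; rewrite /= in_fset1].
Qed.

Lemma PNA_of_istar (R : realType) (y : nat -> var) (sigma : dmem R) k (nu : distr R) :
  (forall i, (i < k)%N -> y i \notin sdom sigma) -> (0 < k)%N -> valid_distr nu ->
  istar (fun i => @sat_var R (y i)) k sigma nu ->
  PNA nu (singletons [fset y i | i in iota 0 k]).
Proof.
elim: k nu => [//|[|k] IH] nu y_notin _ nu_valid.
  case=> [y0_sigma|y0_nu]; first by move: (y_notin 0%N isT); rewrite y0_sigma.
  rewrite imfset_iota1 singletons1; apply: PNA_fset1; first exact: fset1_neq0.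
  by apply/fsubsetP => x; rewrite in_fset1 => /eqP ->.
case=> mu' [mu1 [mu2 [mu'_valid [mu1_valid [mu2_valid [mu'_nu [mu'_oplus [mu1_sat mu2_sat]]]]]]]].
have PNA1 := IH mu1 (fun i ik => y_notin i (ltnW ik)) isT mu1_valid mu1_sat.
have PNA2 : PNA mu2 [fset [fset y k.+1]].
  apply: PNA_fset1; first exact: fset1_neq0.
  case: mu2_sat => [y_sigma|y_mu2]; first by move: (y_notin k.+1 (ltnSn _)); rewrite y_sigma.
  by apply/fsubsetP => x; rewrite in_fset1 => /eqP ->.
have [_ [_ [_ [_ oplus_PNA]]]] := mu'_oplus.
apply: (PNA_dsub nu_valid mu'_valid mu'_nu).
rewrite imfset_iotaS singletonsU singletons1.
exact: oplus_PNA PNA1.1 PNA1.2.1 PNA2.1 PNA2.2.1 PNA1 PNA2.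
Qed.

Section PNASingletons.
Variables (R : realType) (mu : distr R) (Y : {fset var}).
Hypotheses (mu_valid : valid_distr mu) (mu_PNA : PNA mu (singletons Y)).
Local Open Scope ereal_scope.
Implicit Types (phi psi : rmem R -> R) (m : rmem R).

Lemma PNA_Enn_mul_le_cover A C phi psi :
  A != fset0 -> C != fset0 -> [disjoint A & C] -> A `|` C = Y ->
  (forall m, 0 <= phi (restr A m))%R -> (forall m, 0 <= psi (restr C m))%R ->
  ((nondecr_on A phi /\ nondecr_on C psi) \/ (nonincr_on A phi /\ nonincr_on C psi)) ->
  Enn mu (fun m => phi (restr A m) * psi (restr C m))%R
    <= Enn mu (fun m => phi (restr A m)) * Enn mu (fun m => psi (restr C m)).
Proof.
move=> A_neq0 C_neq0 AC_dis AC_Y phi_ge0 psi_ge0 mono.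
have A_neq_C : A != C.
  have /fset0Pn[a aA] := A_neq0; apply/eqP => A_eq_C.
  by move/fdisjointP: AC_dis => /(_ a aA); rewrite -A_eq_C aA.
set T := A |` [fset C].
have T_part : is_partition T.
  by apply: is_partitionU; rewrite ?cover_fset1//; exact: is_partition_fset1.
have T_cover : cover T = Y by rewrite coverU !cover_fset1.
pose f X := if X == A then phi else psi.
have fA : f A = phi by rewrite /f eqxx.
have fC : f C = psi by rewrite /f eq_sym (negbTE A_neq_C).
have f_ge0 X : X \in T -> forall m, (0 <= f X (restr X m))%R.
  by case/fset1UP => [->|/fset1P ->]; rewrite ?fA ?fC.
have f_mono : (forall X, X \in T -> nondecr_on X (f X)) \/
              (forall X, X \in T -> nonincr_on X (f X)).
  by case: mono => -[phi_mono psi_mono]; [left|right] => X /fset1UP[->|/fset1P ->]; rewrite ?fA ?fC.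
have := mu_PNA.2.2 T T_part _ f f_ge0 f_mono.
rewrite -{1}T_cover => /(_ (coarsens_singletons T)).
have A_notin : A \notin [fset C] by rewrite in_fset1.
rewrite big_fsetU1// big_seq_fset1 fA fC.
by under eq_Enn do rewrite big_fsetU1// big_seq_fset1 fA fC.
Qed.

Section DisjointBlocks.
Variables (A B : {fset var}).
Hypotheses (A_Y : A `<=` Y) (B_Y : B `<=` Y) (AB_dis : [disjoint A & B]).

Lemma PNA_Enn_mul_le phi psi :
  (forall m, 0 <= phi (restr A m))%R -> (forall m, 0 <= psi (restr B m))%R ->
  ((nondecr_on A phi /\ nondecr_on B psi) \/ (nonincr_on A phi /\ nonincr_on B psi)) ->
  Enn mu (fun m => phi (restr A m) * psi (restr B m))%R
    <= Enn mu (fun m => phi (restr A m)) * Enn mu (fun m => psi (restr B m)).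
Proof.
move=> phi_ge0 psi_ge0 mono.
(* Empty blocks are not allowed in partitions, but then the factor is constant. *)
have [A0|[a aA]] := fset_0Vmem A.
  have phiA m : phi (restr A m) = phi (restr A (fun=> 0%R)).
    by rewrite A0 (restr_fset0 m (fun=> 0%R)).
  rewrite (eq_Enn _ (fun m => congr1 (fun x => x * _)%R (phiA m))) EnnZl//.
  by rewrite (eq_Enn _ phiA) (Enn_cst mu_valid).
have [B0|[b bB]] := fset_0Vmem B.
  have psiB m : psi (restr B m) = psi (restr B (fun=> 0%R)).
    by rewrite B0 (restr_fset0 m (fun=> 0%R)).
  rewrite (eq_Enn _ (fun m => congr1 (fun x => _ * x)%R (psiB m))).
  under eq_Enn do rewrite mulrC.
  by rewrite EnnZl// (eq_Enn _ psiB) (Enn_cst mu_valid) muleC.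
set C := Y `\` A.
have BC : B `<=` C.
  apply/fsubsetP => x xB; rewrite in_fsetD (fsubsetP B_Y)// andbT.
  by apply: contraTN xB => xA; move/fdisjointP: AB_dis; apply.
have psiC m : psi (restr B (restr C m)) = psi (restr B m) by rewrite restr_restr.
have := @PNA_Enn_mul_le_cover A C phi (fun m => psi (restr B m)).
rewrite (eq_Enn _ psiC); under eq_Enn do rewrite psiC; apply.
- by apply/fset0Pn; exists a.
- by apply/fset0Pn; exists b; exact: (fsubsetP BC).
- by apply/fdisjointP => x xA; rewrite in_fsetD xA.
- apply/fsetP => x; rewrite in_fsetU in_fsetD.
  by case: (boolP (x \in A)) => xA //=; rewrite (fsubsetP A_Y).
- by [].
- by move=> m; rewrite psiC.
- case: mono => -[phi_mono psi_mono]; [left|right]; split=> //.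
  + exact: nondecr_on_sub.
  + exact: nonincr_on_sub.
Qed.

(* [c - psi] is comonotone with [phi], and the bound [c] keeps every expectation finite. *)
Lemma PNA_Enn_mul_ge_bounded phi psi (c : R) :
  (forall m, 0 <= phi (restr A m) <= c)%R -> (forall m, 0 <= psi (restr B m) <= c)%R ->
  ((nondecr_on A phi /\ nonincr_on B psi) \/ (nonincr_on A phi /\ nondecr_on B psi)) ->
  Enn mu (fun m => phi (restr A m)) * Enn mu (fun m => psi (restr B m))
    <= Enn mu (fun m => phi (restr A m) * psi (restr B m))%R.
Proof.
move=> phi_bd psi_bd mono.
have phi_ge0 m : (0 <= phi (restr A m))%R by case/andP: (phi_bd m).
have psi_ge0 m : (0 <= psi (restr B m))%R by case/andP: (psi_bd m).
pose h m := (c - psi m)%R.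
have h_bd m : (0 <= h (restr B m) <= c)%R.
  by case/andP: (psi_bd m) => psi0 psic; rewrite subr_ge0 psic lerBlDr lerDl.
have h_ge0 m : (0 <= h (restr B m))%R by case/andP: (h_bd m).
have phi_h_le : Enn mu (fun m => phi (restr A m) * h (restr B m))%R <=
                Enn mu (fun m => phi (restr A m)) * Enn mu (fun m => h (restr B m)).
  apply: PNA_Enn_mul_le => //.
  by case: mono => -[phi_mono psi_mono]; [left|right]; split=> // m m' mm'; rewrite lerB ?psi_mono.
have sum_phi : Enn mu (fun m => phi (restr A m) * h (restr B m))%R +
               Enn mu (fun m => phi (restr A m) * psi (restr B m))%R =
               c%:E * Enn mu (fun m => phi (restr A m)).
  have phi_h_ge0 m : (0 <= phi (restr A m) * h (restr B m))%R by rewrite mulr_ge0.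
  have phi_psi_ge0 m : (0 <= phi (restr A m) * psi (restr B m))%R by rewrite mulr_ge0.
  by rewrite -EnnD// -EnnZl//; apply: eq_Enn => m; rewrite /h /=; ring.
have sum_psi : Enn mu (fun m => h (restr B m)) + Enn mu (fun m => psi (restr B m)) = c%:E.
  by rewrite -EnnD// -(Enn_cst mu_valid c); apply: eq_Enn => m; rewrite /h /= subrK.
have finE g (d : R) : (forall m, 0 <= g m <= d)%R -> Enn mu g = (fine (Enn mu g))%:E.
  by move=> g_bd; rewrite fineK// (Enn_fin_num mu_valid g_bd).
have prod_bd g m : (0 <= g (restr B m) <= c)%R -> (0 <= phi (restr A m) * g (restr B m) <= c * c)%R.
  by case/andP: (phi_bd m) => ? ? /andP[? ?]; rewrite mulr_ge0//= ler_pM.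
move: phi_h_le sum_phi sum_psi.
rewrite (finE _ _ phi_bd) (finE _ _ psi_bd) (finE _ _ h_bd).
rewrite (finE _ _ (fun m => prod_bd h m (h_bd m))) (finE _ _ (fun m => prod_bd psi m (psi_bd m))).
have : (0 <= fine (Enn mu (fun m => phi (restr A m))))%R by rewrite fine_ge0// Enn_ge0.
rewrite -!EFinM -!EFinD !lee_fin => Phi_ge0 le_h [sum_phi] [sum_psi]; nra.
Qed.

(* Truncating [phi] and [psi] at a level [c] above the terms entering two given
   partial sums reduces to the bounded case. *)
Lemma PNA_Enn_mul_ge phi psi :
  (forall m, 0 <= phi (restr A m))%R -> (forall m, 0 <= psi (restr B m))%R ->
  ((nondecr_on A phi /\ nonincr_on B psi) \/ (nonincr_on A phi /\ nondecr_on B psi)) ->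
  Enn mu (fun m => phi (restr A m)) * Enn mu (fun m => psi (restr B m))
    <= Enn mu (fun m => phi (restr A m) * psi (restr B m))%R.
Proof.
move=> phi_ge0 psi_ge0 mono; have wt_ge0 := valid_wt_ge0 mu_valid.
rewrite {1 2}/Enn; apply: nneseriesM_le => [n|n|k l]; rewrite ?mulr_ge0//.
pose c := (\sum_(0 <= i < k) phi (restr A (pt mu i)) + \sum_(0 <= i < l) psi (restr B (pt mu i)))%R.
have c_ge0 : (0 <= c)%R by rewrite addr_ge0// sumr_ge0.
have phi_le_c i : (i < k)%N -> (phi (restr A (pt mu i)) <= c)%R.
  move=> ik; apply: le_trans (sumr_ge_term (fun j => phi_ge0 (pt mu j)) ik) _.
  by rewrite lerDl sumr_ge0.
have psi_le_c i : (i < l)%N -> (psi (restr B (pt mu i)) <= c)%R.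
  move=> il; apply: le_trans (sumr_ge_term (fun j => psi_ge0 (pt mu j)) il) _.
  by rewrite lerDr sumr_ge0.
pose phic m := Num.min (phi m) c; pose psic m := Num.min (psi m) c.
have phic_bd m : (0 <= phic (restr A m) <= c)%R by rewrite le_min phi_ge0 c_ge0 ge_min lexx orbT.
have psic_bd m : (0 <= psic (restr B m) <= c)%R by rewrite le_min psi_ge0 c_ge0 ge_min lexx orbT.
have phic_ge0 m := (andP (phic_bd m)).1; have psic_ge0 m := (andP (psic_bd m)).1.
have trunc_le := @PNA_Enn_mul_ge_bounded phic psic c phic_bd psic_bd.
apply: le_trans (le_trans (trunc_le _) _).
- apply: lee_pmul; try by apply: sume_ge0 => i _; rewrite lee_fin mulr_ge0.
  + apply: sum_le_nneseries => i; first by rewrite lee_fin mulr_ge0.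
    by move=> ik; rewrite /phic min_l ?phi_le_c.
  + apply: sum_le_nneseries => i; first by rewrite lee_fin mulr_ge0.
    by move=> il; rewrite /psic min_l ?psi_le_c.
- by case: mono => -[phi_mono psi_mono]; [left|right]; split=> m m' mm';
    apply: le_min2 (lexx c); [exact: phi_mono|exact: psi_mono|exact: phi_mono|exact: psi_mono].
apply: le_Enn => // [m|m]; first by rewrite mulr_ge0.
by rewrite ler_pM// ge_min lexx.
Qed.

End DisjointBlocks.
End PNASingletons.

Section FunrposnegM.
Variables (T : Type) (R : realDomainType).
Implicit Types (f g : T -> R).

Lemma funrposM f g : (f \* g)^\+ = f^\+ \* g^\+ \+ f^\- \* g^\-.
Proof.
have pos (z : R) : 0 <= z -> Num.max z 0 = z /\ Num.max (- z) 0 = 0.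
  by move=> z0; rewrite max_l// max_r// oppr_le0.
have neg (z : R) : z <= 0 -> Num.max z 0 = 0 /\ Num.max (- z) 0 = - z.
  by move=> z0; rewrite max_r// max_l// oppr_ge0.
apply/funext => x; rewrite /funrpos /funrneg /=.
have [fx0|fx0] := orP (le_total 0 (f x)); have [gx0|gx0] := orP (le_total 0 (g x)).
- have [-> ->] := pos _ fx0; have [-> ->] := pos _ gx0.
  by have [-> _] := pos _ (mulr_ge0 fx0 gx0); rewrite mulr0 !addr0.
- have [-> ->] := pos _ fx0; have [-> ->] := neg _ gx0.
  by have [-> _] := neg _ (mulr_ge0_le0 fx0 gx0); rewrite mulr0 mul0r addr0.
- have [-> ->] := neg _ fx0; have [-> ->] := pos _ gx0.
  by have [-> _] := neg _ (mulr_le0_ge0 fx0 gx0); rewrite mulr0 mul0r addr0.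
- have [-> ->] := neg _ fx0; have [-> ->] := neg _ gx0.
  by have [-> _] := pos _ (mulr_le0 fx0 gx0); rewrite mul0r add0r mulrNN.
Qed.

Lemma funrnegM f g : (f \* g)^\- = f^\+ \* g^\- \+ f^\- \* g^\+.
Proof.
have -> : (f \* g)^\- = (f \* \- g)^\+ by apply/funext => x; rewrite /funrneg /funrpos /= mulrN.
by rewrite funrposM funrposN funrnegN.
Qed.

End FunrposnegM.

Section PositiveNegativeParts.
Variables (R : realType) (A : {fset var}) (f : rmem R -> R).

Lemma nondecr_on_funrposneg : nondecr_on A f -> nondecr_on A f^\+ /\ nonincr_on A f^\-.
Proof. by move=> f_mono; split=> m m' mm'; apply: le_max2 (lexx 0%R); rewrite ?lerN2 f_mono. Qed.

Lemma nonincr_on_funrposneg : nonincr_on A f -> nonincr_on A f^\+ /\ nondecr_on A f^\-.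
Proof. by move=> f_mono; split=> m m' mm'; apply: le_max2 (lexx 0%R); rewrite ?lerN2 f_mono. Qed.

Lemma Enn_funrposneg_fin_num (mu : distr R) : valid_distr mu ->
  bdd_below_on A f \/ bdd_above_on A f ->
  Enn mu (fun m => f (restr A m))^\+ \is a fin_num \/
  Enn mu (fun m => f (restr A m))^\- \is a fin_num.
Proof.
move=> mu_valid [[c f_ge]|[c f_le]]; [right|left].
- apply: (Enn_fin_num mu_valid (d := Num.max (- c) 0)) => m.
  by rewrite funrneg_ge0 le_max2 ?lerN2.
- apply: (Enn_fin_num mu_valid (d := Num.max c 0)) => m.
  by rewrite funrpos_ge0 le_max2.
Qed.

End PositiveNegativeParts.

Lemma NA_of_PNA_singletons (R : realType) (mu : distr R) Y :
  valid_distr mu -> PNA mu (singletons Y) -> NA mu Y.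
Proof.
move=> mu_valid mu_PNA; split; first by rewrite -(cover_singletons Y); exact: mu_PNA.2.1.
move=> A B A_Y B_Y AB_dis f g mono f_bd g_bd.
have le := PNA_Enn_mul_le mu_valid mu_PNA A_Y B_Y AB_dis.
have ge := PNA_Enn_mul_ge mu_valid mu_PNA A_Y B_Y AB_dis.
pose F m := f (restr A m); pose G m := g (restr B m).
pose Fp := F^\+; pose Fn := F^\-; pose Gp := G^\+; pose Gn := G^\-.
have [pp nn pn np] : [/\ (Enn mu (Fp \* Gp)%R <= Enn mu Fp * Enn mu Gp)%E,
    (Enn mu (Fn \* Gn)%R <= Enn mu Fn * Enn mu Gn)%E,
    (Enn mu Fp * Enn mu Gn <= Enn mu (Fp \* Gn)%R)%E &
    (Enn mu Fn * Enn mu Gp <= Enn mu (Fn \* Gp)%R)%E].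
  case: mono => -[f_mono g_mono];
    [ have [? ?] := nondecr_on_funrposneg f_mono; have [? ?] := nondecr_on_funrposneg g_mono
    | have [? ?] := nonincr_on_funrposneg f_mono; have [? ?] := nonincr_on_funrposneg g_mono ];
  by split; [apply: (le f^\+ g^\+)|apply: (le f^\- g^\-)|apply: (ge f^\+ g^\-)|
             apply: (ge f^\- g^\+)]; rewrite // ?funrpos_ge0 ?funrneg_ge0 //; tauto.
change (Ex mu (F \* G)%R <= Ex mu F * Ex mu G)%E.
rewrite !ExE funrposM funrnegM !EnnD //; try by move=> m; rewrite mulr_ge0.
apply: le_trans (leeB (leeD pp nn) (leeD pn np)) _.
apply: lee_mulBB; try by apply: (Enn_ge0 mu_valid) => m; rewrite ?funrpos_ge0 ?funrneg_ge0.
- exact: Enn_funrposneg_fin_num mu_valid f_bd.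
- exact: Enn_funrposneg_fin_num mu_valid g_bd.
Qed.

Theorem mainTheorem12 (R : realType) (mu : distr R) (K : nat) (y : nat -> var) :
  valid_distr mu ->
  (forall x, x \in ddom mu -> isRV x) ->
  (0 < K)%N ->
  (forall i, (i < K)%N -> isRV (y i)) ->
  (forall i j, (i < K)%N -> (j < K)%N -> y i = y j -> i = j) ->
  NA mu [fset y i | i in iota 0 K]
  <-> (forall sigma : dmem R, (forall x, x \in sdom sigma -> ~~ isRV x) ->
        istar (fun i => @sat_var R (y i)) K sigma mu).
Proof.
move=> mu_valid _ K_gt0 _ y_inj; split=> [mu_NA sigma _|istar_mu].
  rewrite -[mu]reframe_ddom; apply: (istar_reframe_of_NA sigma mu_valid y_inj mu_NA).
  - by rewrite K_gt0 leqnn.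
  - exact: mu_NA.1.
pose sigma0 := DMem fset0 (fun=> 0%R : R).
have sigma0_dom x : x \in sdom sigma0 -> ~~ isRV x by rewrite in_fset0.
apply: (NA_of_PNA_singletons mu_valid).
apply: (PNA_of_istar _ K_gt0 mu_valid (istar_mu sigma0 sigma0_dom)) => i _.
by rewrite in_fset0.
Qed.
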